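(* Let $U:\mathbb{R}^d\to\mathbb{R}$ be twice continuously differentiable with $\nabla U(0)=0$ and $\sup_x\|\mathrm{D}^2U(x)\|\le\mathtt{L}$, and assume there exist $\mathtt{m}>0$, $\mathtt{K}\ge0$ with $\mathrm{D}^2U(x)[y,y]\ge\mathtt{m}$ whenever $\|x\|\ge\mathtt{K}$, $\|y\|=1$. Let $\bar\gamma\in(0,\mathtt{m}^3/(4\mathtt{L}^4)]$, $\epsilon=(\mathtt{m}^3/2^4)\{2^{1/2}\mathtt{L}^2+2^{-3/2}\bar\gamma^{1/2}\mathtt{L}^3\}^{-1}$ and $$C_{2,\bar\gamma}=2\mathtt{L}+2^{1/2}\mathtt{L}^2\epsilon^{-1}+(\bar\gamma/2)\mathtt{L}^2+2^{-3/2}\bar\gamma^{3/2}\mathtt{L}^3\epsilon^{-1}.$$ Let $\tilde{\mathtt{K}}=2\mathtt{K}(1+\mathtt{L}/\mathtt{m})$. Then for all $\gamma\in(0,\bar\gamma]$ and $x,z\in\mathbb{R}^d$ with $\|x\|\ge\max(2\mathtt{K},\tilde{\mathtt{K}})$ and $\|z\|\le\|x\|/(4\sqrt{2\gamma})$, $$\tau_\gamma(x,z)\le C_{2,\bar\gamma}\gamma\|z\|^2.$$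
   Context: For $\gamma>0$ and $x,z\in\mathbb{R}^d$, $\tau_\gamma(x,z)=U(x-\gamma\nabla U(x)+\sqrt{2\gamma}z)-U(x)+\frac12\big\{\|z-(\gamma/2)^{1/2}[\nabla U(x)+\nabla U(x-\gamma\nabla U(x)+\sqrt{2\gamma}z)]\|^2-\|z\|^2\big\}$. *)

From HB Require Import structures.
From mathcomp Require Import all_boot all_order all_algebra.
From mathcomp Require Import all_classical all_reals all_analysis.
Set Implicit Arguments. Unset Strict Implicit. Unset Printing Implicit Defensive.
Import Order.TTheory GRing.Theory Num.Theory.
Import numFieldNormedType.Exports.
Local Open Scope ring_scope.

Section defs.
Variables (R : realType) (d : nat).

Definition dotv (u v : 'rV[R]_d) : R := \sum_(i < d) u ord0 i * v ord0 i.
Definition enorm (u : 'rV[R]_d) : R := Num.sqrt (dotv u u).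

Definition grad (U : 'rV[R]_d -> R) (x : 'rV[R]_d) : 'rV[R]_d :=
  \row_i ('d U x) (delta_mx ord0 i).

Definition hess (U : 'rV[R]_d -> R) (x : 'rV[R]_d) : 'M[R]_d :=
  'J (grad U) x.

Definition hess_form (U : 'rV[R]_d -> R) (x y : 'rV[R]_d) : R :=
  (y *m hess U x *m y^T) ord0 ord0.

Definition opnorm_le (H : 'M[R]_d) (L : R) : Prop :=
  forall w : 'rV[R]_d, enorm (w *m H) <= L * enorm w.

Definition C2 (U : 'rV[R]_d -> R) : Prop :=
  (forall x, differentiable U x) /\
  (forall x, differentiable (grad U) x) /\
  continuous (hess U).

Definition tau (U : 'rV[R]_d -> R) (gamma : R) (x z : 'rV[R]_d) : R :=
  let y := x - gamma *: grad U x + Num.sqrt (2 * gamma) *: z in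
  U y - U x +
  2^-1 * ((enorm (z - Num.sqrt (gamma / 2) *: (grad U x + grad U y))) ^+ 2
          - (enorm z) ^+ 2).

End defs.

(* Put h := -γ ∇U(x) + √(2γ) z, so that the proposal is y = x + h, and w := ∇U(y) - ∇U(x).
   Expanding the square,
     τ_γ(x,z) = [U(x+h) - U(x) - <∇U(x+h), h>] + √(γ/2) <z, w> + (γ/4) |w|².
   Since ∇U(0) = 0 and the Hessian is bounded by L, |∇U(x)| <= L |x|; with 4γL <= 1 and the
   bound on |z| this gives |h| <= |x|/2, so the segment [x, x+h] stays in {|.| >= K}, where U
   is m-strongly convex: the bracket is at most -(m/2)|h|², and |w| <= L |h|.  Since
   4γL² <= m, completing the square in |h| gives τ_γ(x,z) <= (L²/m) γ |z|², and
   L²/m <= C_{2,γ̄}. *)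

From HB Require Import structures.
From mathcomp Require Import all_boot all_order all_algebra.
From mathcomp Require Import all_classical all_reals all_analysis.
From mathcomp Require Import ring lra.
Import Order.TTheory GRing.Theory Num.Theory.
Import numFieldNormedType.Exports.
Local Open Scope ring_scope.
Set Implicit Arguments. Unset Strict Implicit. Unset Printing Implicit Defensive.

Section Euclidean.
Variables (R : realType) (n : nat).
Implicit Types (u v w x h : 'rV[R]_n) (k : R).

Lemma dotvC u v : dotv u v = dotv v u.
Proof. by apply: eq_bigr => i _; rewrite mulrC. Qed.

Lemma dotvDl u w v : dotv (u + w) v = dotv u v + dotv w v.
Proof. by rewrite /dotv -big_split; apply: eq_bigr => i _; rewrite !mxE mulrDl. Qed.

Lemma dotvDr v u w : dotv v (u + w) = dotv v u + dotv v w.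
Proof. by rewrite dotvC dotvDl !(dotvC v). Qed.

Lemma dotvZl k u v : dotv (k *: u) v = k * dotv u v.
Proof. by rewrite /dotv mulr_sumr; apply: eq_bigr => i _; rewrite !mxE mulrA. Qed.

Lemma dotvZr k v u : dotv v (k *: u) = k * dotv v u.
Proof. by rewrite dotvC dotvZl dotvC. Qed.

Lemma dotvNl u v : dotv (- u) v = - dotv u v.
Proof. by rewrite -scaleN1r dotvZl mulN1r. Qed.

Lemma dotvBl u w v : dotv (u - w) v = dotv u v - dotv w v.
Proof. by rewrite dotvDl dotvNl. Qed.

Lemma dotv0l v : dotv 0 v = 0.
Proof. by rewrite -(scale0r 0) dotvZl mul0r. Qed.

Lemma dotvv_ge0 u : 0 <= dotv u u.
Proof. by apply: sumr_ge0 => i _; rewrite -expr2 sqr_ge0. Qed.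

Lemma dotvv_eq0 u : dotv u u = 0 -> u = 0.
Proof.
move=> /psumr_eq0P u0; apply/rowP => i; rewrite mxE.
by apply/eqP; rewrite -sqrf_eq0 expr2 u0 // => j _; rewrite -expr2 sqr_ge0.
Qed.

Lemma dotv_sqr_le u v : dotv u v ^+ 2 <= dotv u u * dotv v v.
Proof.
have [->|v_neq0] := eqVneq v 0; first by rewrite (dotvC u) !dotv0l expr0n mulr0.
have v_gt0 : 0 < dotv v v.
  by rewrite lt_def dotvv_ge0 andbT; apply: contra_neq v_neq0; apply: dotvv_eq0.
have := dotvv_ge0 (dotv v v *: u - dotv u v *: v).
rewrite dotvBl !dotvDr !dotvZl !dotvZr -!scaleNr !dotvZr (dotvC v u) => uv_ge0.
rewrite -subr_ge0 -(pmulr_rge0 _ v_gt0); apply: le_trans uv_ge0 _.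
by rewrite le_eqVlt; apply/orP; left; apply/eqP; ring.
Qed.

Lemma enorm_ge0 u : 0 <= enorm u.
Proof. exact: sqrtr_ge0. Qed.

Lemma enorm_sqr u : enorm u ^+ 2 = dotv u u.
Proof. by rewrite sqr_sqrtr // dotvv_ge0. Qed.

Lemma enorm_eq0 u : enorm u = 0 -> u = 0.
Proof. by move=> u0; apply: dotvv_eq0; rewrite -enorm_sqr u0 expr0n. Qed.

Lemma enormZ k u : enorm (k *: u) = `|k| * enorm u.
Proof. by rewrite /enorm dotvZl dotvZr mulrA -expr2 sqrtrM ?sqr_ge0 // sqrtr_sqr. Qed.

Lemma enormN u : enorm (- u) = enorm u.
Proof. by rewrite -scaleN1r enormZ normrN normr1 mul1r. Qed.

Lemma dotv_le u v : dotv u v <= enorm u * enorm v.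
Proof.
rewrite /enorm -sqrtrM ?dotvv_ge0 //; apply: le_trans (ler_norm _) _.
by rewrite -sqrtr_sqr ler_sqrt ?dotv_sqr_le // mulr_ge0 ?dotvv_ge0.
Qed.

Lemma enormD_le u v : enorm (u + v) <= enorm u + enorm v.
Proof.
have uv_ge0 : 0 <= enorm u + enorm v by rewrite addr_ge0 ?enorm_ge0.
rewrite -(ger0_norm uv_ge0) -sqrtr_sqr ler_sqrt ?sqr_ge0 //.
rewrite sqrrD !enorm_sqr dotvDl !dotvDr (dotvC v u); have := dotv_le u v; lra.
Qed.

Lemma enorm_segment_ge x h (K s : R) :
  2 * K <= enorm x -> enorm h <= enorm x / 2 -> 0 <= s <= 1 ->
  K <= enorm (x + s *: h).
Proof.
move=> Kx hx /andP[s0 s1].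
have := enormD_le (x + s *: h) (- (s *: h)).
rewrite addrK enormN enormZ ger0_norm //.
have : s * enorm h <= enorm h by rewrite ler_piMl ?enorm_ge0.
lra.
Qed.

Lemma enorm_delta (i : 'I_n) : enorm (delta_mx 0 i : 'rV[R]_n) = 1.
Proof.
rewrite /enorm /dotv (bigD1 i) //= big1 => [|j ji]; last by rewrite !mxE (negbTE ji) mulr0.
by rewrite !mxE eqxx /= mulr1 addr0 sqrtr1.
Qed.

End Euclidean.

Lemma enorm_rV0 (R : realType) (u : 'rV[R]_0) : enorm u = 0.
Proof. by rewrite /enorm /dotv big_ord0 sqrtr0. Qed.

Section MeanValueInequalities.
Variable R : realType.

Lemma le_derive_increment (f g df dg : R -> R) (a b : R) : a <= b ->
  (forall t : R, is_derive t 1 f (df t)) -> (forall t : R, is_derive t 1 g (dg t)) ->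
  (forall t, a < t < b -> df t <= dg t) ->
  f b - f a <= g b - g a.
Proof.
move=> ab Df Dg le_dfg.
have D (t : R) : is_derive t (1 : R) (f - g) (df t - dg t) by exact: is_deriveB.
have dv (t : R) : derivable (f - g) t 1 by have [] := D t.
suff : (f - g) b <= (f - g) a by rewrite !fctE; lra.
apply: (@ler0_derive1_le_cc R (f - g) a b) => //.
- move=> t; rewrite in_itv /= => t_ab.
  by rewrite derive1E derive_val subr_le0 le_dfg.
- by apply: derivable_within_continuous => t _.
- by rewrite in_itv /= lexx ab.
- by rewrite in_itv /= lexx ab.
Qed.

Lemma is_derive_linear (c t : R) : is_derive t 1 (fun s => c * s) c.
Proof.
apply: is_derive_eq (is_deriveZ c (is_derive_id t (1 : R))) _.
by rewrite /GRing.scale /= mulr1.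
Qed.

Lemma is_derive_quadratic (a b t : R) :
  is_derive t 1 (fun s => a * s + b * s ^+ 2) (a + b * (2 * t)).
Proof.
have Did := is_derive_id t (1 : R).
apply: is_derive_eq (is_deriveD (is_deriveZ a Did) (is_deriveZ b (is_deriveX 2 Did))) _.
by rewrite /GRing.scale /= !mulr1 expr1.
Qed.

Variables f df : R -> R.
Hypothesis Df : forall t : R, is_derive t 1 f (df t).

Lemma derive_increment_le (M a b : R) : a <= b ->
  (forall t, a < t < b -> df t <= M) -> f b - f a <= M * (b - a).
Proof.
move=> ab le_dfM.
by have := le_derive_increment ab Df (is_derive_linear M) le_dfM; rewrite mulrBr.
Qed.

Lemma derive_increment_ge (M a b : R) : a <= b ->
  (forall t, a < t < b -> M <= df t) -> M * (b - a) <= f b - f a.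
Proof.
move=> ab le_Mdf.
by have := le_derive_increment ab (is_derive_linear M) Df le_Mdf; rewrite mulrBr.
Qed.

Lemma derive_gap_le (M : R) :
  (forall t, 0 < t < 1 -> M * (1 - t) <= df 1 - df t) ->
  f 1 - f 0 - df 1 <= - (M / 2).
Proof.
move=> gap.
have slope t : 0 < t < 1 -> df t <= df 1 - M + M / 2 * (2 * t) by move=> /gap; lra.
have := le_derive_increment ler01 Df (is_derive_quadratic (df 1 - M) (M / 2)) slope.
by rewrite expr1n expr0n /=; lra.
Qed.

End MeanValueInequalities.

Section Line.
Variables (R : realType) (n : nat).
Implicit Types (p q h v : 'rV[R]_n) (t : R).

Lemma is_derive_line (W : normedModType R) (f : 'rV[R]_n -> W) p h t :
  differentiable f (p + t *: h) ->
  is_derive t 1 (fun s => f (p + s *: h)) ('d f (p + t *: h) h).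
Proof.
move=> df.
have Dl : is_diff t (cst p + *:%R^~ h : R -> 'rV[R]_n) (0 + *:%R^~ h).
  exact: is_diffD.
have dl : differentiable (fun s : R => p + s *: h) t by [].
have dfl : differentiable (f \o (fun s : R => p + s *: h)) t.
  exact: differentiable_comp.
apply: DeriveDef; first exact: diff_derivable.
rewrite deriveE // diff_comp //=; congr ('d f _ _).
by rewrite diff_val /= add0r scale1r.
Qed.

Lemma diff_grad (U : 'rV[R]_n -> R) q v : 'd U q v = dotv (grad U q) v.
Proof.
rewrite {1}(row_sum_delta v) linear_sum /dotv.
by apply: eq_bigr => i _; rewrite linearZ /= mxE mulrC.
Qed.

Lemma is_derive_dotv (M : R -> 'rV[R]_n) (dM v : 'rV[R]_n) t :
  is_derive t 1 M dM -> is_derive t 1 (fun s => dotv (M s) v) (dotv dM v).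
Proof.
move=> DM; have /derivable_mxP dMij : derivable M t 1 by case: DM.
have -> : (fun s => dotv (M s) v) = \sum_(i < n) v 0 i *: (fun s => M s 0 i).
  by apply/funext => s; rewrite /dotv fct_sumE; apply: eq_bigr => i _; rewrite /= mulrC.
rewrite /dotv; apply: is_derive_sum => i.
have -> : dM 0 i * v 0 i = v 0 i *: 'D_1 (fun s => M s 0 i) t.
  by rewrite -(@derive_val _ _ _ _ _ _ _ DM) derive_mx // mxE mulrC.
exact/is_deriveZ/derivableP.
Qed.

Variable U : 'rV[R]_n -> R.

Lemma is_derive_line_fun p h t : (forall x, differentiable U x) ->
  is_derive t 1 (fun s => U (p + s *: h)) (dotv (grad U (p + t *: h)) h).
Proof. by move=> dU; rewrite -diff_grad; apply: is_derive_line. Qed.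

Lemma is_derive_line_grad p h v t : (forall x, differentiable (grad U) x) ->
  is_derive t 1 (fun s => dotv (grad U (p + s *: h)) v)
    (dotv (h *m hess U (p + t *: h)) v).
Proof.
move=> dG; apply: is_derive_dotv.
have := is_derive_line (dG (p + t *: h)).
by rewrite -deriveE // deriveEjacobian.
Qed.

Lemma hess_formE q v : hess_form U q v = dotv (v *m hess U q) v.
Proof.
rewrite /hess_form /dotv [in LHS]mxE.
by apply: eq_bigr => j _; rewrite [v^T _ _]mxE.
Qed.

End Line.

Section GradientLipschitz.
Variables (R : realType) (n : nat) (U : 'rV[R]_n -> R) (L : R).
Hypotheses (dG : forall x, differentiable (grad U) x)
  (hessL : forall x, opnorm_le (hess U x) L).
Implicit Types (p h v : 'rV[R]_n).

Lemma dotv_grad_incr_le p h v :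
  dotv (grad U (p + h)) v - dotv (grad U p) v <= L * enorm h * enorm v.
Proof.
have := derive_increment_le (M := L * enorm h * enorm v)
  (fun t => is_derive_line_grad p h v t dG) ler01.
rewrite scale1r scale0r addr0 subr0 mulr1; apply=> t _.
by apply: le_trans (dotv_le _ _) _; apply: ler_wpM2r; [exact: enorm_ge0 | exact: hessL].
Qed.

Lemma enorm_grad_incr_le p h : 0 <= L ->
  enorm (grad U (p + h) - grad U p) <= L * enorm h.
Proof.
move=> L_ge0; set w := grad U (p + h) - grad U p.
have := dotv_grad_incr_le p h w; rewrite -dotvBl -/w -enorm_sqr.
have := enorm_ge0 w; have : 0 <= L * enorm h by rewrite mulr_ge0 ?enorm_ge0.
nra.
Qed.

End GradientLipschitz.

Section StrongConvexity.
Variables (R : realType) (n : nat) (U : 'rV[R]_n -> R) (m K : R).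
Hypotheses (dU : forall x, differentiable U x)
  (dG : forall x, differentiable (grad U) x).
Hypothesis hess_ge : forall x y : 'rV[R]_n,
  K <= enorm x -> enorm y = 1 -> m <= hess_form U x y.
Implicit Types (p q h : 'rV[R]_n).

Lemma curvature_le_opnorm (L : R) : (0 < n)%N -> 0 <= K ->
  (forall x, opnorm_le (hess U x) L) -> m <= L.
Proof.
move=> n_gt0 K_ge0 hessL; pose e : 'rV[R]_n := delta_mx 0 (Ordinal n_gt0).
have e1 : enorm e = 1 by exact: enorm_delta.
have Kx : K <= enorm (K *: e) by rewrite enormZ e1 mulr1 ger0_norm.
have := hessL (K *: e) e; rewrite e1 mulr1 => eH_le.
apply: le_trans (hess_ge Kx e1) _; rewrite hess_formE.
by apply: le_trans (dotv_le _ _) _; rewrite e1 mulr1.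
Qed.

Lemma hess_form_ge q h : K <= enorm q -> m * enorm h ^+ 2 <= hess_form U q h.
Proof.
move=> Kq; have [->|h_neq0] := eqVneq h 0.
  by rewrite hess_formE mul0mx dotv0l /enorm dotv0l sqrtr0 expr0n mulr0.
have h_gt0 : 0 < enorm h.
  by rewrite lt_def enorm_ge0 andbT; apply: contra_neq h_neq0; exact: enorm_eq0.
have /hess_ge := Kq; move=> /(_ ((enorm h)^-1 *: h)).
rewrite enormZ ger0_norm ?invr_ge0 ?enorm_ge0 // mulVf ?gt_eqF // => /(_ erefl).
rewrite !hess_formE -scalemxAl dotvZl dotvZr mulrA -expr2 exprVn.
by rewrite ler_pdivlMl ?exprn_gt0 // mulrC.
Qed.

Variables p h : 'rV[R]_n.
Hypothesis segment_far : forall s, 0 <= s <= 1 -> K <= enorm (p + s *: h).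

Lemma grad_segment_incr_ge t : 0 <= t <= 1 ->
  m * enorm h ^+ 2 * (1 - t) <= dotv (grad U (p + h)) h - dotv (grad U (p + t *: h)) h.
Proof.
case/andP=> t0 t1.
have := derive_increment_ge (M := m * enorm h ^+ 2)
  (fun s => is_derive_line_grad p h h s dG) t1.
rewrite scale1r; apply=> s /andP[ts s1].
rewrite -hess_formE; apply: hess_form_ge; apply: segment_far.
by rewrite (le_trans t0 (ltW ts)) ltW.
Qed.

Lemma strong_convexity_segment :
  U (p + h) - U p - dotv (grad U (p + h)) h <= - (m * enorm h ^+ 2 / 2).
Proof.
have := derive_gap_le (fun t => is_derive_line_fun p h t dU) (M := m * enorm h ^+ 2).
rewrite scale1r scale0r addr0; apply=> t /andP[t0 t1].
by apply: grad_segment_incr_ge; rewrite !ltW.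
Qed.

End StrongConvexity.

Section TauExpansion.
Variables (R : realType) (n : nat).

Lemma sqrt_double_half (g : R) : 0 <= g -> Num.sqrt (2 * g) = 2 * Num.sqrt (g / 2).
Proof.
move=> g0; rewrite -[2 * g](_ : 2 ^+ 2 * (g / 2) = _); last by field.
by rewrite sqrtrM ?sqr_ge0 // sqrtr_sqr ger0_norm.
Qed.

Lemma dotv_complete_square (z a b : 'rV[R]_n) (c : R) :
  2^-1 * (dotv (z - c *: (a + b)) (z - c *: (a + b)) - dotv z z)
  + dotv b (- ((2 * c ^+ 2) *: a) + (2 * c) *: z)
  = c * dotv z (b - a) + (2 * c ^+ 2) / 4 * dotv (b - a) (b - a).
Proof.
rewrite /dotv -sumrB !mulr_sumr -!big_split /=.
by apply: eq_bigr => i _; rewrite !mxE; field.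
Qed.

Lemma complete_square_step (z a b h : 'rV[R]_n) (g : R) : 0 <= g ->
  h = - (g *: a) + Num.sqrt (2 * g) *: z ->
  2^-1 * (enorm (z - Num.sqrt (g / 2) *: (a + b)) ^+ 2 - enorm z ^+ 2)
  = - dotv b h + Num.sqrt (g / 2) * dotv z (b - a) + g / 4 * enorm (b - a) ^+ 2.
Proof.
move=> g0 ->; rewrite sqrt_double_half // !enorm_sqr.
have c2 : Num.sqrt (g / 2) ^+ 2 = g / 2 by rewrite sqr_sqrtr // divr_ge0.
move: c2; set c := Num.sqrt (g / 2) => c2; clearbody c.
have -> : g = 2 * c ^+ 2 by rewrite c2; field.
have := dotv_complete_square z a b c; lra.
Qed.

Lemma tau_split (U : 'rV[R]_n -> R) (g : R) (x z h w : 'rV[R]_n) :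
  0 <= g -> h = - (g *: grad U x) + Num.sqrt (2 * g) *: z ->
  w = grad U (x + h) - grad U x ->
  tau U g x z = U (x + h) - U x - dotv (grad U (x + h)) h
                + Num.sqrt (g / 2) * dotv z w + g / 4 * enorm w ^+ 2.
Proof.
move=> g0 hE ->; rewrite /tau /=.
have -> : x - g *: grad U x + Num.sqrt (2 * g) *: z = x + h by rewrite hE addrA.
by rewrite (complete_square_step _ g0 hE) !addrA.
Qed.

End TauExpansion.

Lemma tau_rV0 (R : realType) (U : 'rV[R]_0 -> R) (g : R) (x z : 'rV[R]_0) :
  tau U g x z = 0.
Proof.
rewrite /tau /= !enorm_rV0 subrr mulr0 addr0.
by rewrite [x - _ + _]thinmx0 [x]thinmx0 subrr.
Qed.

Section Constants.
Variable R : realType.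

Lemma completed_square_le (E D W H Z c g m L : R) :
  0 < m -> 0 <= H -> 0 <= Z -> 0 <= c -> g = 2 * c ^+ 2 -> 4 * g * L ^+ 2 <= m ->
  E <= - (m * H ^+ 2 / 2) -> D <= Z * W -> 0 <= W <= L * H ->
  E + c * D + g / 4 * W ^+ 2 <= L ^+ 2 / m * g * Z ^+ 2.
Proof.
move=> m0 H0 Z0 c0 gE gL hE hD /andP[W0 hW].
have cD : c * D <= c * Z * (L * H).
  by rewrite -mulrA; apply: ler_wpM2l => //; apply: le_trans hD _; apply: ler_wpM2l.
have gW : g / 4 * W ^+ 2 <= m / 16 * H ^+ 2.
  have W2 : W ^+ 2 <= L ^+ 2 * H ^+ 2 by rewrite -exprMn ler_pXn2r // nnegrE (le_trans W0).
  have : 0 <= g by rewrite gE mulr_ge0 ?sqr_ge0.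
  nra.
have square :
    - (m * H ^+ 2 / 2) + c * Z * (L * H) + m / 16 * H ^+ 2 <= L ^+ 2 / m * g * Z ^+ 2.
  rewrite -subr_ge0 gE.
  have -> : L ^+ 2 / m * (2 * c ^+ 2) * Z ^+ 2
              - (- (m * H ^+ 2 / 2) + c * Z * (L * H) + m / 16 * H ^+ 2)
      = m^-1 * ((c * L * Z - m * H / 2) ^+ 2 + (c * L * Z) ^+ 2 + 3 / 16 * (m * H) ^+ 2).
    by field; rewrite gt_eqF.
  apply: mulr_ge0; first by rewrite invr_ge0 ltW.
  by rewrite !addr_ge0 ?sqr_ge0 // mulr_ge0 ?sqr_ge0.
lra.
Qed.

Lemma step_size_bounds (m L g gbar : R) :
  0 < m -> m <= L -> 0 < g -> g <= gbar -> gbar <= m ^+ 3 / (4 * L ^+ 4) ->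
  4 * g * L <= 1 /\ 4 * g * L ^+ 2 <= m.
Proof.
move=> m0 mL g0 g_le gbar_le; have L0 : 0 < L := lt_le_trans m0 mL.
have gL4 : 4 * g * L ^+ 4 <= m ^+ 3.
  have : g * (4 * L ^+ 4) <= m ^+ 3.
    by rewrite -ler_pdivlMr ?mulr_gt0 ?exprn_gt0 //; exact: le_trans g_le gbar_le.
  by rewrite mulrCA mulrA.
have mL3 : m ^+ 3 <= L ^+ 3 by rewrite ler_pXn2r // nnegrE ltW.
split.
  rewrite -(ler_pM2r (exprn_gt0 3 L0)) mul1r.
  have -> : 4 * g * L * L ^+ 3 = 4 * g * L ^+ 4 by ring.
  exact: le_trans gL4 mL3.
rewrite -(ler_pM2r (exprn_gt0 2 L0)).
have -> : 4 * g * L ^+ 2 * L ^+ 2 = 4 * g * L ^+ 4 by ring.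
have mL2 : m ^+ 2 <= L ^+ 2 by rewrite ler_pXn2r // nnegrE ltW.
apply: le_trans gL4 _; rewrite exprSr [_ * m]mulrC.
by apply: ler_wpM2l => //; exact: ltW.
Qed.

Lemma curvature_ratio_le_C2 (m L gbar eps : R) :
  0 < m -> m <= L -> 0 < gbar ->
  eps = (m ^+ 3 / 2 ^+ 4) *
     (Num.sqrt 2 * L ^+ 2 + (Num.sqrt 2 ^+ 3)^-1 * Num.sqrt gbar * L ^+ 3)^-1 ->
  L ^+ 2 / m <= 2 * L + Num.sqrt 2 * L ^+ 2 / eps + (gbar / 2) * L ^+ 2
     + (Num.sqrt 2 ^+ 3)^-1 * (Num.sqrt gbar ^+ 3) * L ^+ 3 / eps.
Proof.
move=> m0 mL gb0 epsE; have L0 : 0 < L := lt_le_trans m0 mL.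
have r2_gt0 : 0 < Num.sqrt 2 :> R by rewrite sqrtr_gt0 ltr0n.
have r2_sqr : Num.sqrt 2 ^+ 2 = 2 :> R by rewrite sqr_sqrtr ?ler0n.
have sg_ge0 : 0 <= Num.sqrt gbar := sqrtr_ge0 gbar.
set Q := Num.sqrt 2 * L ^+ 2 + (Num.sqrt 2 ^+ 3)^-1 * Num.sqrt gbar * L ^+ 3.
have Q_ge : Num.sqrt 2 * L ^+ 2 <= Q.
  rewrite /Q lerDl; apply: mulr_ge0; last exact: exprn_ge0 (ltW L0).
  by rewrite mulr_ge0 // invr_ge0 exprn_ge0 // ltW.
have Q_gt0 : 0 < Q by apply: lt_le_trans Q_ge; rewrite mulr_gt0 ?exprn_gt0.
have eps_gt0 : 0 < eps by rewrite epsE -/Q mulr_gt0 ?invr_gt0 ?divr_gt0 ?exprn_gt0.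
have main_term : L ^+ 2 / m <= Num.sqrt 2 * L ^+ 2 / eps.
  have -> : Num.sqrt 2 * L ^+ 2 / eps = 16 * (Num.sqrt 2 * L ^+ 2) * Q / m ^+ 3.
    by rewrite epsE -/Q; field; rewrite !gt_eqF ?exprn_gt0.
  apply: (@le_trans _ _ (32 * L ^+ 4 / m ^+ 3)).
    rewrite -subr_ge0.
    have -> : 32 * L ^+ 4 / m ^+ 3 - L ^+ 2 / m = L ^+ 2 * (32 * L ^+ 2 - m ^+ 2) / m ^+ 3.
      by field; rewrite gt_eqF.
    have mL2 : m ^+ 2 <= L ^+ 2 by rewrite ler_pXn2r // nnegrE ltW.
    apply: divr_ge0; last by rewrite exprn_ge0 // ltW.
    by apply: mulr_ge0; [exact: sqr_ge0 | rewrite subr_ge0; have := sqr_ge0 L; lra].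
  apply: ler_wpM2r; first by rewrite invr_ge0 exprn_ge0 // ltW.
  have -> : 32 * L ^+ 4 = 16 * (Num.sqrt 2 * L ^+ 2) * (Num.sqrt 2 * L ^+ 2).
    by rewrite -mulrA -expr2 exprMn r2_sqr; ring.
  by apply: ler_wpM2l => //; rewrite mulr_ge0 // mulr_ge0 ?ltW // exprn_gt0.
have t1 : 0 <= 2 * L by rewrite mulr_ge0 // ltW.
have t2 : 0 <= gbar / 2 * L ^+ 2 by rewrite mulr_ge0 ?divr_ge0 ?sqr_ge0 // ltW.
have t3 : 0 <= (Num.sqrt 2 ^+ 3)^-1 * Num.sqrt gbar ^+ 3 * L ^+ 3 / eps.
  apply: divr_ge0; last exact: ltW.
  by rewrite !mulr_ge0 ?invr_ge0 ?exprn_ge0 // ltW.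
lra.
Qed.

End Constants.

Section TauBound.
Variables (R : realType) (n : nat) (U : 'rV[R]_n -> R) (L m K : R).
Hypotheses (dU : forall x, differentiable U x)
  (dG : forall x, differentiable (grad U) x) (grad0 : grad U 0 = 0).
Hypotheses (L_ge0 : 0 <= L) (hessL : forall x, opnorm_le (hess U x) L).
Hypotheses (m_gt0 : 0 < m) (hess_ge : forall x y : 'rV[R]_n,
  K <= enorm x -> enorm y = 1 -> m <= hess_form U x y).

Lemma enorm_grad_le x : enorm (grad U x) <= L * enorm x.
Proof. by have := enorm_grad_incr_le dG hessL 0 x L_ge0; rewrite add0r grad0 subr0. Qed.

Lemma tau_le g x z : 0 < g -> 4 * g * L <= 1 -> 4 * g * L ^+ 2 <= m ->
  2 * K <= enorm x -> enorm z <= enorm x / (4 * Num.sqrt (2 * g)) ->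
  tau U g x z <= L ^+ 2 / m * g * enorm z ^+ 2.
Proof.
move=> g0 gL1 gL2 Kx zx.
have s_gt0 : 0 < Num.sqrt (2 * g) by rewrite sqrtr_gt0 mulr_gt0.
pose h := - (g *: grad U x) + Num.sqrt (2 * g) *: z.
pose w := grad U (x + h) - grad U x.
rewrite (tau_split (h := h) (w := w) (ltW g0)) //.
have drift_le : g * enorm (grad U x) <= enorm x / 4.
  apply: le_trans (ler_wpM2l (ltW g0) (enorm_grad_le x)) _.
  have := enorm_ge0 x; nra.
have noise_le : Num.sqrt (2 * g) * enorm z <= enorm x / 4.
  have -> : enorm x / 4 = Num.sqrt (2 * g) * (enorm x / (4 * Num.sqrt (2 * g))).
    by field; rewrite gt_eqF.
  by apply: ler_wpM2l => //; exact: ltW.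
have h_le : enorm h <= enorm x / 2.
  apply: le_trans (enormD_le _ _) _.
  rewrite enormN !enormZ !ger0_norm ?(ltW g0) ?(ltW s_gt0) //.
  by apply: le_trans (lerD drift_le noise_le) _; lra.
apply: (completed_square_le (H := enorm h)) => //.
- exact: enorm_ge0.
- exact: enorm_ge0.
- by rewrite sqr_sqrtr ?divr_ge0 ?ltW //; field.
- exact (strong_convexity_segment dU dG hess_ge (fun s => enorm_segment_ge Kx h_le)).
- exact: dotv_le.
- by rewrite enorm_ge0 enorm_grad_incr_le.
Qed.

End TauBound.

Unset Implicit Arguments. Set Strict Implicit.

Theorem lemma2 (R : realType) (d : nat) (U : 'rV[R]_d -> R) (L m K gbar : R) :
  C2 U ->
  grad U 0 = 0 ->
  (forall x, opnorm_le (hess U x) L) ->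
  0 < m -> 0 <= K ->
  (forall x y : 'rV[R]_d, K <= enorm x -> enorm y = 1 -> m <= hess_form U x y) ->
  0 < gbar -> gbar <= m ^+ 3 / (4 * L ^+ 4) ->
  let eps := (m ^+ 3 / 2 ^+ 4) *
     (Num.sqrt 2 * L ^+ 2 + (Num.sqrt 2 ^+ 3)^-1 * Num.sqrt gbar * L ^+ 3)^-1 in
  let C2g := 2 * L + Num.sqrt 2 * L ^+ 2 / eps + (gbar / 2) * L ^+ 2
     + (Num.sqrt 2 ^+ 3)^-1 * (Num.sqrt gbar ^+ 3) * L ^+ 3 / eps in
  let Kt := 2 * K * (1 + L / m) in
  forall (gamma : R) (x z : 'rV[R]_d),
    0 < gamma -> gamma <= gbar ->
    Num.max (2 * K) Kt <= enorm x ->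
    enorm z <= enorm x / (4 * Num.sqrt (2 * gamma)) ->
    tau U gamma x z <= C2g * gamma * (enorm z) ^+ 2.
Proof.
move=> [dU [dG _]] grad0 hessL m_gt0 K_ge0 hess_ge gbar_gt0 gbar_le eps C2g Kt g x z.
move=> g_gt0 g_le; rewrite ge_max => /andP[Kx _] zx.
have [d0|d_gt0] := posnP d.
  by subst d; rewrite tau_rV0 enorm_rV0 expr0n /= mulr0.
have mL := curvature_le_opnorm hess_ge d_gt0 K_ge0 hessL.
have [gL1 gL2] := step_size_bounds m_gt0 mL g_gt0 g_le gbar_le.
have L_ge0 : 0 <= L := le_trans (ltW m_gt0) mL.
apply: le_trans (tau_le dU dG grad0 L_ge0 hessL m_gt0 hess_ge g_gt0 gL1 gL2 Kx zx) _.
apply: ler_wpM2r; first exact: sqr_ge0.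
apply: ler_wpM2r; first exact: ltW.
exact: curvature_ratio_le_C2 m_gt0 mL gbar_gt0 erefl.
Qed.
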